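(* Let $\gamma\in(0,1)$, $T\ge1$, and let $Z_1,\dots,Z_T$ be i.i.d. geometric random variables with parameter $1-\gamma$, i.e. with values in $\{1,2,\dots\}$ and $\mathbb P(Z_j>i)=\gamma^i$ for all integers $i\ge0$. Then $$\mathbb E\Big[\max_{j\in[T]}\frac{Z_j}{\log(1+Z_j)}\Big]\le\frac{4+2\log T}{1-\gamma}.$$ *)

From HB Require Import structures.
From mathcomp Require Import all_boot all_order all_algebra.
From mathcomp Require Import all_classical all_reals all_analysis.
Set Implicit Arguments. Unset Strict Implicit. Unset Printing Implicit Defensive.
Import Order.TTheory GRing.Theory Num.Theory.
Local Open Scope classical_set_scope.
Local Open Scope ring_scope.

(* Mutual independence of a finite family of real random variables:
   for every family of Borel sets B_j, the joint probability factorizes.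
   (Taking B_j = setT for j outside a subfamily J recovers the product rule
   for every subfamily.) *)
Definition mutually_independent d (Om : measurableType d) (R : realType)
  (P : probability Om R) (n : nat) (Z : 'I_n -> {RV P >-> R}) : Prop :=
  forall B : 'I_n -> set R, (forall j, measurable (B j)) ->
    P (\bigcap_(j in [set: 'I_n]) (Z j @^-1` B j)) =
    (\prod_(j < n) P (Z j @^-1` B j))%E.

Definition geometric_rv d (Om : measurableType d) (R : realType)
  (P : probability Om R) (g : R) (Z : {RV P >-> R}) : Prop :=
  (forall x, exists k : nat, Z x = k.+1%:R) /\
  (forall i : nat, P [set x | i%:R < Z x] = (g ^+ i)%:E).

(* max_{j in [T]} Z_j / log(1 + Z_j), pointwise (values are positive, so the
   initial 0 of the fold is harmless for n >= 1). *)
Definition max_ratio d (Om : measurableType d) (R : realType)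
  (P : probability Om R) (n : nat) (Z : 'I_n -> {RV P >-> R}) (x : Om) : R :=
  \big[Num.max/0]_(j < n) (Z j x / ln (1 + Z j x)).

From HB Require Import structures.
From mathcomp Require Import all_boot all_order all_algebra.
From mathcomp Require Import all_classical all_reals all_analysis.
From mathcomp Require Import lra ring measurable_realfun.
Set Implicit Arguments.
Unset Strict Implicit.
Unset Printing Implicit Defensive.

Import Order.TTheory GRing.Theory Num.Theory.
Local Open Scope classical_set_scope.
Local Open Scope ring_scope.

(* Since [ln (1 + z) >= 1/2] for [z >= 1], the maximum is at most
   [2 max_j Z_j <= 2 (k + sum_j (Z_j - k)^+)] for any cutoff [k], and
   [E (Z_j - k)^+ = sum_i P(Z_j > i + k) = g^k / (1 - g)].  Choosing [k] just
   above [ln T / (1 - g)] makes [T g^k <= 1], which gives the bound. *)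

Section real_inequalities.
Variable R : realType.

Lemma ln1D_ge_half (y : R) : 1 <= y -> 1 / 2 <= ln (1 + y).
Proof.
move=> y1; have y1p : 0 < 1 + y by lra.
have := expR_ge1Dx (- ln (1 + y)); rewrite expRN lnK ?posrE // => le_inv.
have : (1 + y)^-1 <= 2^-1 by rewrite lef_pV2 ?posrE //; lra.
lra.
Qed.

Lemma ratio_ln1D_le (z : R) : 1 <= z -> z / ln (1 + z) <= 2 * z.
Proof.
move=> z1; have := ln1D_ge_half z1 => ln_half.
by rewrite ler_pdivrMr -?mulrA; nra.
Qed.

Lemma bigmax_ratio_le_excess n (c : R) (F : 'I_n -> R) :
  0 <= c -> (forall j, 1 <= F j) ->
  \big[Num.max/0]_(j < n) (F j / ln (1 + F j)) <=
    2 * (c + \sum_(j < n) Num.max 0 (F j - c)).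
Proof.
move=> c0 F1.
have excess_sum_ge0 (Q : pred 'I_n) : 0 <= \sum_(j < n | Q j) Num.max 0 (F j - c).
  by apply: sumr_ge0 => j _; rewrite le_max lexx.
apply/bigmax_leP; split=> [|j _ /=]; first by have := excess_sum_ge0 xpredT; lra.
apply: (le_trans (ratio_ln1D_le (F1 j))); rewrite (bigD1 j) //=.
have := excess_sum_ge0 (xpredC1 j).
have : F j - c <= Num.max 0 (F j - c) by rewrite le_max lexx orbT.
lra.
Qed.

Lemma geometric_partial_sum (g : R) (k n : nat) :
  (1 - g) * \sum_(0 <= i < n) g ^+ (i + k) = g ^+ k - g ^+ (n + k).
Proof.
elim: n => [|n IH]; first by rewrite big_geq // mulr0 add0n subrr.
by rewrite big_nat_recr //= mulrDr IH addSn exprS; ring.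
Qed.

Lemma geometric_series_shift_le (g : R) (k : nat) : 0 <= g < 1 ->
  (\sum_(i <oo) (g ^+ (i + k))%:E <= (g ^+ k / (1 - g))%:E)%E.
Proof.
move=> /andP[g0 g1]; apply: lime_le.
  by apply: is_cvg_nneseries => n _ _; rewrite lee_fin exprn_ge0.
apply: nearW => n /=.
rewrite sumEFin lee_fin ler_pdivlMr ?subr_gt0 // mulrC geometric_partial_sum.
by rewrite lerBlDr lerDl exprn_ge0.
Qed.

(* [k = floor (ln T / (1 - g)) + 1], using [g <= exp (g - 1)]. *)
Lemma exists_geometric_cutoff (g : R) (T : nat) : 0 < g < 1 -> (1 <= T)%N ->
  exists k : nat, T%:R * g ^+ k <= 1 /\ k%:R <= ln T%:R / (1 - g) + 1.
Proof.
move=> /andP[g0 g1] T1.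
have Tp : 0 < T%:R :> R by rewrite ltr0n.
have x0 : 0 <= ln (T%:R : R) / (1 - g).
  by rewrite divr_ge0 ?ln_ge0 ?ler1n // subr_ge0 ltW.
have /andP[trunc_le trunc_gt] := truncn_itv x0.
set k := (Num.truncn _).+1 in trunc_gt *.
exists k; split; last by rewrite /k -addn1 natrD lerD2r.
have gk : g ^+ k <= expR (- (k%:R * (1 - g))).
  rewrite -mulrN expRM_natl; apply: lerXn2r; rewrite ?nnegrE ?expR_ge0 ?(ltW g0) //.
  by have := expR_ge1Dx (g - 1); rewrite opprB; lra.
have : expR (- (k%:R * (1 - g))) <= (T%:R : R)^-1.
  rewrite -[X in _ <= X]lnK ?posrE ?invr_gt0 // lnV ?posrE // ler_expR lerN2.
  by rewrite -ler_pdivrMr ?subr_gt0 // ltW.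
move=> /(le_trans gk) gkT.
by rewrite -[X in _ <= X](mulfV (lt0r_neq0 Tp)) ler_wpM2l ?(ltW Tp).
Qed.

End real_inequalities.

Section measurability.
Context d (Om : measurableType d) (R : realType).

Lemma measurable_bigmaxr (I : Type) (s : seq I) (Q : pred I) (F : I -> Om -> R) :
  (forall i, measurable_fun setT (F i)) ->
  measurable_fun setT (fun x => \big[Num.max/0]_(i <- s | Q i) F i x).
Proof.
move=> mF; elim: s => [|a s IH].
  by under eq_fun do rewrite big_nil; exact: measurable_cst.
under eq_fun do rewrite big_cons.
by case: (Q a) => //; exact: measurable_maxr.
Qed.

Lemma measurable_superlevel (X : Om -> R) (r : R) :
  measurable_fun setT X -> measurable [set x | r < X x].
Proof.
move=> mX; rewrite -preimage_itvoy -[_ @^-1` _]setTI.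
exact: mX measurableT _ (measurable_itv _).
Qed.

(* On [[1, +oo[] the ratio is [z * w z] with [w] nonincreasing, hence Borel. *)
Lemma measurable_max_ratio (P : probability Om R) n (Z : 'I_n -> {RV P >-> R}) :
  (forall j x, 1 <= Z j x) -> measurable_fun setT (max_ratio Z).
Proof.
move=> Z1; pose w (z : R) := (ln (1 + Num.max z 1))^-1.
have max1_gt1 (z : R) : 1 < 1 + Num.max z 1.
  have : 1 <= Num.max z 1 by rewrite le_max lexx orbT.
  lra.
have mw : measurable_fun setT w.
  apply: nonincreasing_measurable => // s t st.
  have max1_gt0 (z : R) : 0 < 1 + Num.max z 1 := lt_trans ltr01 (max1_gt1 z).
  rewrite /w lef_pV2 ?posrE ?ln_gt0 ?ler_ln ?posrE ?lerD2l //.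
  by rewrite ge_max !le_max st lexx !orbT.
have -> : max_ratio Z = fun x => \big[Num.max/0]_(j <- index_enum 'I_n | true) (Z j x * w (Z j x)).
  by apply/funext => x; apply: eq_bigr => j _; rewrite /w max_l ?Z1.
apply: measurable_bigmaxr => j; apply: measurable_funM; first exact: measurable_funPT.
exact: measurableT_comp mw (measurable_funPT (Z j)).
Qed.

End measurability.

Lemma max0_natrB (R : realType) (m k : nat) : Num.max 0 (m%:R - k%:R : R) = (m - k)%:R.
Proof.
case: (leqP k m) => km; first by rewrite natrB // max_r // subr_ge0 ler_nat.
have -> : (m - k = 0)%N by apply/eqP; rewrite subn_eq0 ltnW.
by rewrite max_l // subr_le0 ler_nat ltnW.
Qed.

Lemma excess_le_tail_series (T : Type) (R : realType) (X : T -> R) (k m : nat) x :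
  X x = m%:R ->
  ((Num.max 0 (X x - k%:R))%:E <=
   \sum_(i <oo) (\1_[set y | (i + k)%:R < X y] x)%:E)%E.
Proof.
move=> Xm; rewrite Xm max0_natrB.
apply: (le_trans _ (nneseries_lim_ge (m - k) _)); last first.
  by move=> i _ _; rewrite lee_fin indicE ler0n.
rewrite (eq_big_nat _ _ (F2 := fun=> 1%E)); last first.
  by move=> i /andP[_ ik]; rewrite indicE mem_set //= Xm ltr_nat addnC -ltn_subRL.
by rewrite sumEFin sumr_const_nat subn0.
Qed.

Lemma expectation_excess_geometric d (Om : measurableType d) (R : realType)
    (P : probability Om R) (g : R) (X : {RV P >-> R}) (k : nat) :
  0 <= g < 1 -> geometric_rv g X ->
  (\int[P]_x (Num.max 0 (X x - k%:R))%:E <= (g ^+ k / (1 - g))%:E)%E.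
Proof.
move=> g01 [Xnat Xtail].
pose A i := [set y | (i + k)%:R < X y].
have PA i : P (A i) = (g ^+ (i + k))%:E by exact: Xtail.
have mA i : measurable (A i) by apply: measurable_superlevel; exact: measurable_funPT.
have mindic i : measurable_fun setT (fun x => (\1_(A i) x : R)%:E).
  by apply/measurable_EFinP; exact: measurable_indic.
have indic_ge0 i x : (0 <= (\1_(A i) x : R)%:E)%E by rewrite lee_fin indicE ler0n.
apply: (@le_trans _ _ (\int[P]_x \sum_(i <oo) (\1_(A i) x : R)%:E)%E).
  apply: ge0_le_integral => //.
  - by move=> x _; rewrite lee_fin le_max lexx.
  - apply/measurable_EFinP; apply: measurable_maxr; first exact: measurable_cst.
    by apply: measurable_funB; [exact: measurable_funPT | exact: measurable_cst].
  - by apply: ge0_emeasurable_sum => [i x _ _|i _]; [exact: indic_ge0 | exact: mindic].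
  - by move=> x _; have [m Xm] := Xnat x; exact: excess_le_tail_series Xm.
rewrite integral_nneseries //.
under eq_eseriesr do rewrite integral_indic // setIT.
rewrite (eq_eseriesr (fun i _ => PA i)).
exact: geometric_series_shift_le.
Qed.

Lemma expectation_max_ratio_le d (Om : measurableType d) (R : realType)
    (P : probability Om R) (g : R) n (Z : 'I_n -> {RV P >-> R}) (k : nat) :
  0 <= g < 1 -> (forall j, geometric_rv g (Z j)) ->
  (\int[P]_x (max_ratio Z x)%:E <= (2 * (k%:R + n%:R * (g ^+ k / (1 - g))))%:E)%E.
Proof.
move=> g01 geo.
have Z1 j x : 1 <= Z j x by case: (geo j) => Znat _; have [m ->] := Znat x; rewrite ler1n.
pose excess j x := (Num.max 0 (Z j x - k%:R))%:E.
have excess_ge0 j x : (0 <= excess j x)%E by rewrite lee_fin le_max lexx.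
have mexcess j : measurable_fun setT (excess j).
  apply/measurable_EFinP; apply: measurable_maxr; first exact: measurable_cst.
  by apply: measurable_funB; [exact: measurable_funPT | exact: measurable_cst].
have two_ge0 : (0 <= (2 : R)%:E)%E by rewrite lee_fin.
have term_ge0 j x : (0 <= 2%:E * excess j x)%E := mule_ge0 two_ge0 (excess_ge0 j x).
have mterm j : measurable_fun setT (fun x => 2%:E * excess j x)%E.
  exact: measurable_funeM.
apply: (@le_trans _ _ (\int[P]_x ((2 * k%:R)%:E + \sum_(j < n) 2%:E * excess j x))%E).
  apply: ge0_le_integral => //.
  - by move=> x _; rewrite lee_fin /max_ratio bigmax_ge_id.
  - by apply/measurable_EFinP; apply: measurable_max_ratio.
  - apply: emeasurable_funD; first exact: measurable_cst.
    exact: emeasurable_sum.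
  - move=> x _; under eq_bigr do rewrite -EFinM.
    rewrite sumEFin -EFinD lee_fin -mulr_sumr -mulrDr.
    exact: bigmax_ratio_le_excess (ler0n _ _) (Z1 ^~ x).
rewrite ge0_integralD //; last 2 first.
- by move=> x _; exact: sume_ge0.
- exact: emeasurable_sum.
rewrite integral_cst // [X in (_ * X)%E]probability_setT mule1 ge0_integral_sum //.
under eq_bigr do rewrite ge0_integralZl //.
apply: (@le_trans _ _ ((2 * k%:R)%:E + \sum_(j < n) 2%:E * (g ^+ k / (1 - g))%:E)%E).
  apply: leeD2l; apply: lee_sum => j _; apply: lee_wpmul2l => //.
  exact: expectation_excess_geometric.
rewrite -EFinM sumEFin -EFinD lee_fin sumr_const card_ord.
by rewrite -mulr_natl le_eqVlt; apply/orP; left; apply/eqP; ring.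
Qed.

Theorem mainTheorem12 (d : measure_display) (Om : measurableType d)
  (R : realType) (P : probability Om R) (g : R) (T : nat)
  (Z : 'I_T -> {RV P >-> R}) :
  0 < g < 1 -> (1 <= T)%N ->
  mutually_independent Z ->
  (forall j, geometric_rv g (Z j)) ->
  (\int[P]_x (max_ratio Z x)%:E <=
     ((4 + 2 * ln T%:R) / (1 - g))%:E)%E.
Proof.
move=> g01 T1 _ geo; have /andP[g0 g1] := g01.
have [k [Tgk k_le]] := exists_geometric_cutoff g01 T1.
apply: le_trans (expectation_max_ratio_le k _ geo) _; first by rewrite ltW.
have inv_ge1 : 1 <= (1 - g)^-1 by rewrite invf_ge1 ?subr_gt0; lra.
have tail_le : T%:R * (g ^+ k / (1 - g)) <= (1 - g)^-1.
  rewrite mulrA -[X in _ <= X]mul1r; apply: ler_wpM2r Tgk.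
  by rewrite invr_ge0 subr_ge0 ltW.
by rewrite lee_fin [X in _ <= X]mulrDl -[2 * _ / _]mulrA; lra.
Qed.
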